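(* Let $\mathcal{A}$ be the adjacency matrix of a graph on nodes $1,\dots,N$ with $\mathcal{A}_{ii}=1$ for all $i$, and let $H$ be a finite-dimensional, proper LTI system (proper rational transfer matrix) whose input and output are each partitioned into $N$ sub-signals. If $H$ is TF-structured with respect to $\mathcal{A}$, then $H$ is $\mathcal{A}$-structured-realizable. If in addition the feedthrough term $H(\infty)$ is block diagonal, then $H$ is also $\mathcal{A}$-network-realizable. The converse does not hold: there exist a graph $\mathcal{A}$ and a system $H$ which is $\mathcal{A}$-structured-realizable (and even $\mathcal{A}$-network-realizable) but not TF-structured with respect to $\mathcal{A}$.
   Context: A matrix $M$ partitioned into $N\times N$ blocks is called $\mathcal{A}$-structured, written $M\in\mathcal{S}(\mathcal{A})$, if its $(i,j)$ block is zero whenever $\mathcal{A}_{ij}=0$. An LTI system $H$ with inputs and outputs partitioned into $N$ sub-signals is $\mathcal{A}$-structured-realizable if it has a state-space realization $H(s)=C(sI-A)^{-1}B+D$, with the state also partitioned into $N$ (possibly empty) sub-states, such that $A,B,C,D\in\mathcal{S}(\mathcal{A})$; it is $\mathcal{A}$-network-realizable if in addition either both $B,D$ or both $C,D$ are block diagonal. $H$ is TF-structured with respect to $\mathcal{A}$ if the $(i,j)$ block $H_{ij}(s)$ of its transfer matrix is identically zero whenever $\mathcal{A}_{ij}=0$. *)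

From HB Require Import structures.
From mathcomp Require Import all_boot all_order all_algebra.
From mathcomp Require Import fraction reals.
Set Implicit Arguments. Unset Strict Implicit. Unset Printing Implicit Defensive.
Import Order.TTheory GRing.Theory Num.Theory.
Local Open Scope ring_scope.

Notation ratF R := {fraction {poly R}}.

Notation "x %:F" := (@FracField.tofrac _ x).

Definition cst (R : realType) (a : R) : ratF R := (a%:P)%:F.

Definition strictly_proper (R : realType) (h : ratF R) : Prop :=
  exists p q : {poly R}, q != 0 /\ (size p < size q)%N /\ h = p%:F / q%:F.

(* D0 = H(oo): the transfer matrix H is proper with feedthrough D0, i.e.
   H - D0 is strictly proper entrywise. *)
Definition feedthrough (R : realType) p m (H : 'M[ratF R]_(p, m)) (D0 : 'M[R]_(p, m)) : Prop :=
  forall i j, strictly_proper (H i j - cst (D0 i j)).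

Definition proper_tf (R : realType) p m (H : 'M[ratF R]_(p, m)) : Prop :=
  exists D0, feedthrough H D0.

(* Block partitions are given by labelings: coordinate k of a signal belongs
   to sub-signal lbl k. *)
Definition structured (T : zmodType) N (Adj : 'I_N -> 'I_N -> bool) p m
  (lo : 'I_p -> 'I_N) (li : 'I_m -> 'I_N) (M : 'M[T]_(p, m)) : Prop :=
  forall i j, ~~ Adj (lo i) (li j) -> M i j = 0.

Definition block_diag (T : zmodType) N p m
  (lo : 'I_p -> 'I_N) (li : 'I_m -> 'I_N) (M : 'M[T]_(p, m)) : Prop :=
  forall i j, lo i != li j -> M i j = 0.

Definition tf (R : realType) n p m (A : 'M[R]_n) (B : 'M[R]_(n, m))
  (C : 'M[R]_(p, n)) (D : 'M[R]_(p, m)) : 'M[ratF R]_(p, m) :=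
  map_mx (@cst R) C *m invmx ((('X : {poly R})%:F)%:M - map_mx (@cst R) A)
    *m map_mx (@cst R) B + map_mx (@cst R) D.

Definition TF_structured (R : realType) N (Adj : 'I_N -> 'I_N -> bool) p m
  (lo : 'I_p -> 'I_N) (li : 'I_m -> 'I_N) (H : 'M[ratF R]_(p, m)) : Prop :=
  structured Adj lo li H.

Definition structured_realizable (R : realType) N (Adj : 'I_N -> 'I_N -> bool) p m
  (lo : 'I_p -> 'I_N) (li : 'I_m -> 'I_N) (H : 'M[ratF R]_(p, m)) : Prop :=
  exists (n : nat) (ls : 'I_n -> 'I_N) (A : 'M[R]_n) (B : 'M[R]_(n, m))
         (C : 'M[R]_(p, n)) (D : 'M[R]_(p, m)),
    [/\ structured Adj ls ls A, structured Adj ls li B,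
        structured Adj lo ls C, structured Adj lo li D & H = tf A B C D].

Definition network_realizable (R : realType) N (Adj : 'I_N -> 'I_N -> bool) p m
  (lo : 'I_p -> 'I_N) (li : 'I_m -> 'I_N) (H : 'M[ratF R]_(p, m)) : Prop :=
  exists (n : nat) (ls : 'I_n -> 'I_N) (A : 'M[R]_n) (B : 'M[R]_(n, m))
         (C : 'M[R]_(p, n)) (D : 'M[R]_(p, m)),
    [/\ structured Adj ls ls A, structured Adj ls li B,
        structured Adj lo ls C, structured Adj lo li D & H = tf A B C D] /\
      ((block_diag ls li B /\ block_diag lo li D) \/
        (block_diag lo ls C /\ block_diag lo li D)).

(* Subtracting the feedthrough leaves a matrix of strictly proper entries, each
   of the form P/Q with Q monic of a common degree K and deg P < K.  Realize
   every entry (i, j) on its own in controllable canonical form (companion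
   matrix of Q, input vector e_K, output row the coefficients of P) and place
   these blocks side by side.  Labelling the states of block (i, j) by the
   node of input j makes A and B block diagonal; C is structured because an
   entry outside the graph has zero numerator, and H(oo) inherits the zero
   pattern of H.  For the converse, on the path 2 -> 1 -> 0 the double
   integrator 1/s^2 from node 2 to node 0 is realized by one integrator at
   node 2 and one at node 1, although nodes 0 and 2 are not adjacent. *)

From HB Require Import structures.
From mathcomp Require Import all_boot all_order all_algebra.
From mathcomp Require Import fraction reals.
From mathcomp Require Import zify.
Set Implicit Arguments. Unset Strict Implicit. Unset Printing Implicit Defensive.
Import Order.TTheory GRing.Theory Num.Theory.
Local Open Scope ring_scope.

HB.instance Definition _ (R : realType) :=
  GRing.RMorphism.copy (@cst R) (@FracField.tofrac _ \o polyC).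

Lemma block_diag_structured (T : zmodType) N (Adj : 'I_N -> 'I_N -> bool) p m
    (lo : 'I_p -> 'I_N) (li : 'I_m -> 'I_N) (M : 'M[T]_(p, m)) :
  (forall k, Adj k k) -> block_diag lo li M -> structured Adj lo li M.
Proof. by move=> reflA Mdiag i j nadj; apply: Mdiag; apply: contraNneq nadj => ->. Qed.

Lemma sum_enum_rank (V : nmodType) (T : finType) (F : 'I_#|T| -> V) :
  \sum_u F u = \sum_x F (enum_rank x).
Proof. exact: reindex (onW_bij _ (@enum_rank_bij T)). Qed.

Lemma sum_pair_fst_eq (V : nmodType) (I J : finType) (c : I) (F : I * J -> V) :
  \sum_x (if x.1 == c then F x else 0) = \sum_k F (c, k).
Proof.
transitivity (\sum_i \sum_k if i == c then F (i, k) else 0).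
  by rewrite pair_bigA; apply: eq_bigr => -[i k].
rewrite (bigD1 c) //= [X in _ + X]big1 => [|i /negbTE neq_ic]; last first.
  by apply: big1 => k _; rewrite neq_ic.
by rewrite addr0; apply: eq_bigr => k _; rewrite eqxx.
Qed.

Section Realization.
Variable R : realType.
Local Notation s := (('X : {poly R})%:F).

Lemma map_char_poly_mx n (A : 'M[R]_n) :
  map_mx (@FracField.tofrac _) (char_poly_mx A) = s%:M - map_mx (@cst R) A.
Proof. by apply/matrixP => i j; rewrite !mxE rmorphB rmorphMn. Qed.

Lemma sI_sub_unitmx n (A : 'M[R]_n) : s%:M - map_mx (@cst R) A \in unitmx.
Proof.
rewrite -map_char_poly_mx unitmxE det_map_mx unitfE tofrac_eq0.
exact/monic_neq0/char_poly_monic.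
Qed.

Lemma tf_solve n p m (A : 'M[R]_n) (B : 'M[R]_(n, m)) (C : 'M[R]_(p, n)) D
    (X : 'M[ratF R]_(n, m)) :
  (s%:M - map_mx (@cst R) A) *m X = map_mx (@cst R) B ->
  tf A B C D = map_mx (@cst R) C *m X + map_mx (@cst R) D.
Proof. by move=> resX; rewrite /tf -resX -mulmxA mulKmx // sI_sub_unitmx. Qed.

Lemma strictly_proper_cst (d : R) : strictly_proper (cst d) -> d = 0.
Proof.
move=> [p [q [q_neq0 [lt_pq /(congr1 ( *%R^~ q%:F))]]]].
rewrite divfK ?tofrac_eq0 // /cst -rmorphM => /eqP; rewrite tofrac_eq => /eqP dq_p.
by apply: contraTeq lt_pq => d_neq0; rewrite -dq_p size_Cmul // ltnn.
Qed.

Lemma feedthrough_structured N (Adj : 'I_N -> 'I_N -> bool) p m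
    (lo : 'I_p -> 'I_N) (li : 'I_m -> 'I_N) (H : 'M[ratF R]_(p, m)) D0 :
  feedthrough H D0 -> TF_structured Adj lo li H -> structured Adj lo li D0.
Proof.
move=> HD0 Hs i j nadj; apply/eqP; rewrite -oppr_eq0; apply/eqP/strictly_proper_cst.
by have := HD0 i j; rewrite (Hs i j nadj) sub0r rmorphN.
Qed.

Lemma strictly_proper_monic_repr (p q : {poly R}) K :
  q != 0 -> (size p < size q)%N -> (size q <= K.+1)%N ->
  exists P Q : {poly R}, [/\ Q \is monic, size Q = K.+1, (size P <= K)%N &
    p%:F / q%:F = P%:F / Q%:F].
Proof.
move=> q_neq0 lt_pq le_qK.
have lq_neq0 : lead_coef q != 0 by rewrite lead_coef_eq0.
pose a := (lead_coef q)^-1 *: 'X^(K.+1 - size q).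
have size_a : size a = (K.+1 - size q).+1 by rewrite size_scale ?invr_eq0 // size_polyXn.
have a_neq0 : a != 0 by rewrite -size_poly_gt0 size_a.
exists (a * p), (a * q); split.
- by rewrite monicE lead_coefM lead_coefZ lead_coefXn mulr1 mulVf.
- by rewrite size_mul // size_a addSn subnK.
- rewrite (leq_trans (size_polyMleq _ _)) // size_a addSn /=.
  by move: lt_pq le_qK; set sp := size p; set sq := size q; lia.
- by rewrite !rmorphM -mulf_div divff ?mul1r // tofrac_eq0.
Qed.

Lemma strictly_proper_uniform_repr (I : finType) (h : I -> ratF R) :
  (forall x, strictly_proper (h x)) ->
  exists K (P Q : I -> {poly R}), forall x,
    [/\ Q x \is monic, size (Q x) = K.+1, (size (P x) <= K)%N &
      h x = (P x)%:F / (Q x)%:F].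
Proof.
move=> /fin_all_exists[p /fin_all_exists[q hpq]].
exists (\max_x size (q x)).
have /fin_all_exists[P /fin_all_exists[Q hPQ]] : forall x, exists P Q : {poly R},
    [/\ Q \is monic, size Q = (\max_x size (q x)).+1, (size P <= \max_x size (q x))%N &
      h x = P%:F / Q%:F].
  move=> x; have [q_neq0 [lt_pq ->]] := hpq x.
  exact/strictly_proper_monic_repr/leqW/(leq_bigmax x).
by exists P, Q.
Qed.

Lemma tofrac_sum_coef (P : {poly R}) K : (size P <= K)%N ->
  P%:F = \sum_(k < K) cst P`_k * s ^+ k.
Proof.
move=> le_PK; have {1}-> : P = \poly_(k < K) P`_k.
  apply/polyP => k; rewrite coef_poly; case: ltnP => // le_Kk.
  by rewrite nth_default ?(leq_trans le_PK).
rewrite poly_def rmorph_sum.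
by apply: eq_bigr => k _; rewrite -mul_polyC rmorphM rmorphXn.
Qed.

Definition companion_mx K (Q : {poly R}) : 'M[R]_K :=
  \matrix_(k, l) ((l == k.+1 :> nat)%:R - (k.+1 == K)%:R * Q`_l).

(* Rows k < K - 1 only shift s^k to s^(k+1); the last row closes up because
   Q(s) = s^K + \sum_l Q_l s^l. *)
Lemma companion_mx_row K (Q : {poly R}) (k : 'I_K) :
  Q \is monic -> size Q = K.+1 ->
  s * (s ^+ k / Q%:F) - \sum_l cst (companion_mx K Q k l) * (s ^+ l / Q%:F) =
    (k.+1 == K)%:R.
Proof.
move=> Q_monic size_Q.
have Q_neq0 : Q%:F != 0 by rewrite tofrac_eq0 monic_neq0.
have QE : \sum_(l < K) cst Q`_l * (s ^+ l / Q%:F) = 1 - s ^+ K / Q%:F.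
  apply: (mulIf Q_neq0); rewrite mulrBl divfK // mul1r mulr_suml.
  under eq_bigr do rewrite -mulrA divfK //.
  rewrite [in RHS](tofrac_sum_coef (eq_leq size_Q)) big_ord_recr /=.
  by move: Q_monic; rewrite monicE lead_coefE size_Q => /eqP ->; rewrite rmorph1 mul1r addrK.
under eq_bigr do rewrite mxE rmorphB rmorphM !rmorph_nat mulrBl -mulrA mulr_natl mulrb.
rewrite sumrB -big_mkcond (big_ord1_eq _ (fun l => s ^+ l / Q%:F)) -mulr_sumr QE.
rewrite mulrA -exprS.
have [k1_eq_K | k1_neq_K] := eqVneq k.+1 K.
  by rewrite k1_eq_K ltnn sub0r opprK mul1r addrC subrK.
by rewrite ltn_neqAle k1_neq_K ltn_ord mul0r subr0 subrr.
Qed.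

Section ControllableCanonicalForm.
Variables (p m K : nat) (P Q : 'I_p * 'I_m -> {poly R}).
Hypotheses (Q_monic : forall x, Q x \is monic) (size_Q : forall x, size (Q x) = K.+1).
Hypothesis size_P : forall x, (size (P x) <= K)%N.

(* State (i, j, k) is coordinate k of the companion realization of entry
   (i, j); the state space 'I_n is enumerated through enum_val. *)
Local Notation state := ('I_p * 'I_m * 'I_K)%type.
Local Notation n := #|{: state}|.
Local Notation ev := (@enum_val state predT).

Definition ccf_A : 'M[R]_n := \matrix_(u, v)
  if (ev v).1 == (ev u).1 then companion_mx K (Q (ev u).1) (ev u).2 (ev v).2 else 0.

Definition ccf_B : 'M[R]_(n, m) := \matrix_(u, j)
  if (ev u).1.2 == j then ((ev u).2.+1 == K)%:R else 0.

Definition ccf_C : 'M[R]_(p, n) := \matrix_(i, u)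
  if (ev u).1.1 == i then (P (ev u).1)`_(ev u).2 else 0.

Definition ccf_resolvent : 'M[ratF R]_(n, m) := \matrix_(u, j)
  if (ev u).1.2 == j then s ^+ (ev u).2 / (Q (ev u).1)%:F else 0.

Definition ccf_label N (li : 'I_m -> 'I_N) (u : 'I_n) : 'I_N := li (ev u).1.2.

Lemma ccf_resolventP :
  (s%:M - map_mx (@cst R) ccf_A) *m ccf_resolvent = map_mx (@cst R) ccf_B.
Proof.
apply/matrixP => u j; rewrite mulmxBl mul_scalar_mx !mxE sum_enum_rank.
rewrite (eq_bigr (fun x : state => if x.1 == (ev u).1 then
    cst (companion_mx K (Q (ev u).1) (ev u).2 x.2) *
    (if (ev u).1.2 == j then s ^+ x.2 / (Q (ev u).1)%:F else 0) else 0)); last first.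
  by move=> [c l] _; rewrite !mxE enum_rankK /=; case: eqP => [->|]; rewrite ?rmorph0 ?mul0r.
rewrite sum_pair_fst_eq /=; case: ifP => _; first by rewrite companion_mx_row // rmorph_nat.
by rewrite big1 ?rmorph0 ?mulr0 ?subr0 // => l _; rewrite mulr0.
Qed.

Lemma tf_ccf D : tf ccf_A ccf_B ccf_C D =
  \matrix_(i, j) ((P (i, j))%:F / (Q (i, j))%:F) + map_mx (@cst R) D.
Proof.
rewrite (tf_solve _ _ ccf_resolventP); congr (_ + _).
apply/matrixP => i j; rewrite !mxE sum_enum_rank.
rewrite (eq_bigr (fun x : state => if x.1 == (i, j) then
    cst (P (i, j))`_x.2 * (s ^+ x.2 / (Q (i, j))%:F) else 0)); last first.
  move=> -[[i' j'] k] _; rewrite !mxE enum_rankK /= xpair_eqE.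
  by case: eqP => [->|]; case: eqP => [->|]; rewrite ?rmorph0 ?mul0r ?mulr0.
rewrite sum_pair_fst_eq (tofrac_sum_coef (size_P (i, j))) mulr_suml.
by apply: eq_bigr => k _; rewrite mulrA.
Qed.

Lemma block_diag_ccf_A N (li : 'I_m -> 'I_N) :
  block_diag (ccf_label li) (ccf_label li) ccf_A.
Proof.
by move=> u v; rewrite mxE /ccf_label; case: ((ev v).1 =P (ev u).1) => // ->; rewrite eqxx.
Qed.

Lemma block_diag_ccf_B N (li : 'I_m -> 'I_N) : block_diag (ccf_label li) li ccf_B.
Proof.
by move=> u j; rewrite mxE /ccf_label; case: ((ev u).1.2 =P j) => // ->; rewrite eqxx.
Qed.

Lemma structured_ccf_C N (Adj : 'I_N -> 'I_N -> bool)
    (lo : 'I_p -> 'I_N) (li : 'I_m -> 'I_N) :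
  (forall i j, ~~ Adj (lo i) (li j) -> P (i, j) = 0) ->
  structured Adj lo (ccf_label li) ccf_C.
Proof.
move=> P0 i u; rewrite mxE /ccf_label; case: eqP => // <- /P0.
by case: (ev u) => -[i' j'] k /= ->; rewrite coef0.
Qed.

End ControllableCanonicalForm.

Lemma proper_structured_realization N (Adj : 'I_N -> 'I_N -> bool) p m
    (lo : 'I_p -> 'I_N) (li : 'I_m -> 'I_N) (H : 'M[ratF R]_(p, m)) D0 :
  (forall k, Adj k k) -> feedthrough H D0 -> TF_structured Adj lo li H ->
  exists n (ls : 'I_n -> 'I_N) (A : 'M[R]_n) (B : 'M[R]_(n, m)) (C : 'M[R]_(p, n)),
    [/\ structured Adj ls ls A, structured Adj ls li B,
        structured Adj lo ls C, block_diag ls li B & H = tf A B C D0].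
Proof.
move=> reflA HD0 Hs.
have [K [P [Q hPQ]]] := strictly_proper_uniform_repr (fun x => HD0 x.1 x.2).
have Q_monic x : Q x \is monic by case: (hPQ x).
have size_Q x : size (Q x) = K.+1 by case: (hPQ x).
have size_P x : (size (P x) <= K)%N by case: (hPQ x).
have H_D0E i j : H i j - cst (D0 i j) = (P (i, j))%:F / (Q (i, j))%:F.
  by case: (hPQ (i, j)).
exists _, (ccf_label li), (ccf_A K Q), (ccf_B p m K), (ccf_C K P); split.
- exact/block_diag_structured/block_diag_ccf_A.
- exact/block_diag_structured/block_diag_ccf_B.
- apply: structured_ccf_C => i j nadj.
  have := H_D0E i j; rewrite (Hs i j nadj) (feedthrough_structured HD0 Hs nadj) rmorph0 subr0.
  move/esym/eqP; rewrite mulf_eq0 invr_eq0 !tofrac_eq0.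
  by rewrite (negbTE (monic_neq0 (Q_monic (i, j)))) orbF => /eqP.
- exact: block_diag_ccf_B.
- by rewrite tf_ccf //; apply/matrixP => i j; rewrite !mxE -H_D0E subrK.
Qed.

Definition path_adj N (k l : 'I_N) : bool := (k == l) || (k.+1 == l :> nat).

Definition chain_A : 'M[R]_2 := \matrix_(k, l) ((k == 1 :> nat) && (l == 0 :> nat))%:R.
Definition chain_B : 'M[R]_(2, 1) := \matrix_(k, j) (k == 0 :> nat)%:R.
Definition chain_C : 'M[R]_(1, 2) := \matrix_(i, k) (k == 1 :> nat)%:R.

Local Notation node k := (@Ordinal 3 k isT).

Definition chain_label (k : 'I_2) : 'I_3 := if k == 0 :> nat then node 2 else node 1.

Lemma tf_integrator_chain : tf chain_A chain_B chain_C 0 = const_mx (s ^- 2).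
Proof.
have s_neq0 : s != 0 by rewrite tofrac_eq0 polyX_eq0.
pose X : 'M[ratF R]_(2, 1) := \matrix_(k, j) s ^- k.+1.
have resX : (s%:M - map_mx (@cst R) chain_A) *m X = map_mx (@cst R) chain_B.
  apply/matrixP => -[[|[|//]] ?] j; rewrite !mxE !big_ord_recl big_ord0 !mxE /bump /=.
  - by rewrite !rmorph0 rmorph1 mulr1n mulr0n !subr0 mul0r !addr0 expr1 mulfV.
  - rewrite rmorph0 rmorph1 mulr0n sub0r subr0 expr1 addr0 expr2 invfM mulrA mulfV //.
    by rewrite mul1r mulN1r addNr.
rewrite (tf_solve _ _ resX) map_mx0 addr0; apply/matrixP => i j.
by rewrite !mxE !big_ord_recl big_ord0 !mxE /= !rmorph0 rmorph1 mul0r mul1r !add0r addr0.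
Qed.

Lemma integrator_chain_structured :
  [/\ structured (@path_adj 3) chain_label chain_label chain_A,
      structured (@path_adj 3) chain_label (fun=> node 2) chain_B,
      structured (@path_adj 3) (fun=> node 0) chain_label chain_C,
      structured (@path_adj 3) (fun=> node 0) (fun=> node 2) (0 : 'M[R]_(1, 1))
    & block_diag chain_label (fun=> node 2) chain_B].
Proof.
split.
- by move=> [[|[|//]] ?] [[|[|//]] ?]; rewrite mxE.
- by move=> [[|[|//]] ?] j; rewrite mxE.
- by move=> i [[|[|//]] ?]; rewrite mxE.
- by move=> i j; rewrite mxE.
- by move=> [[|[|//]] ?] j; rewrite mxE.
Qed.

Lemma double_integrator_counterexample :
  exists (N : nat) (Adj : 'I_N -> 'I_N -> bool), (forall i, Adj i i) /\
   exists (p m : nat) (lo : 'I_p -> 'I_N) (li : 'I_m -> 'I_N)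
          (H : 'M[ratF R]_(p, m)),
   [/\ proper_tf H, structured_realizable Adj lo li H,
       network_realizable Adj lo li H & ~ TF_structured Adj lo li H].
Proof.
exists 3, (@path_adj 3); split=> [k|]; first by rewrite /path_adj eqxx.
exists 1%N, 1%N, (fun=> node 0), (fun=> node 2), (const_mx (s ^- 2)).
have [sA sB sC sD Bdiag] := integrator_chain_structured.
split.
- exists 0 => i j; exists 1, 'X^2; rewrite !mxE rmorph0 subr0 rmorph1 rmorphXn div1r.
  by rewrite size_polyXn size_poly1 expf_neq0 ?polyX_eq0.
- by exists 2%N, chain_label, chain_A, chain_B, chain_C, 0; rewrite tf_integrator_chain.
- exists 2%N, chain_label, chain_A, chain_B, chain_C, 0.
  by rewrite tf_integrator_chain; split=> //; left; split=> // i j; rewrite mxE.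
- move=> /(_ 0 0 isT)/eqP; rewrite mxE invr_eq0 expf_eq0 /=.
  by rewrite tofrac_eq0 polyX_eq0.
Qed.

End Realization.

Theorem lemma1 (R : realType) :
  (forall (N : nat) (Adj : 'I_N -> 'I_N -> bool), (forall i, Adj i i) ->
   forall (p m : nat) (lo : 'I_p -> 'I_N) (li : 'I_m -> 'I_N)
          (H : 'M[ratF R]_(p, m)),
   proper_tf H -> TF_structured Adj lo li H ->
   structured_realizable Adj lo li H /\
   (forall D0 : 'M[R]_(p, m), feedthrough H D0 -> block_diag lo li D0 ->
      network_realizable Adj lo li H)) /\
  (exists (N : nat) (Adj : 'I_N -> 'I_N -> bool), (forall i, Adj i i) /\
   exists (p m : nat) (lo : 'I_p -> 'I_N) (li : 'I_m -> 'I_N)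
          (H : 'M[ratF R]_(p, m)),
   [/\ proper_tf H, structured_realizable Adj lo li H,
       network_realizable Adj lo li H & ~ TF_structured Adj lo li H]).
Proof.
split; last exact: double_integrator_counterexample.
move=> N Adj reflA p m lo li H [D0 HD0] Hs; split.
  have [n [ls [A [B [C [sA sB sC _ HE]]]]]] := proper_structured_realization reflA HD0 Hs.
  by exists n, ls, A, B, C, D0; split=> //; apply: feedthrough_structured HD0 Hs.
move=> D1 HD1 D1diag.
have [n [ls [A [B [C [sA sB sC Bdiag HE]]]]]] := proper_structured_realization reflA HD1 Hs.
exists n, ls, A, B, C, D1; split; last by left.
by split=> //; apply: block_diag_structured.
Qed.
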